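(* Let $\mathcal{V}$ be a variety and let $e$ be a unary term in the language of $\mathcal{V}$ with $\mathcal{V}\models e(e(x))=e(x)$. (1) The class of all $\mathbf{A}\in\mathcal{V}$ for which $e$ is separating is a prevariety, i.e. it is closed under isomorphic images, subalgebras and products. (2) For $\mathbf{A},\mathbf{B}\in\mathcal{V}$ consider the map $\mathrm{Hom}(\mathbf{A},\mathbf{B})\to\mathrm{Hom}(e(\mathbf{A}),e(\mathbf{B}))$, $\varphi\mapsto\varphi|_{e(A)}$. (i) If $e$ is dense for $\mathbf{A}$, this map is injective. (ii) If $e$ is dense for $\mathbf{A}$ and separating for $\mathbf{B}$, this map is surjective.
   Context: For an algebra $\mathbf{A}$ and a unary term $e$ with $\mathbf{A}\models e(e(x))=e(x)$, the localization $e(\mathbf{A})$ is the algebra with universe $e(A)$ whose fundamental operation symbols are the symbols $et$, one for each term $t$ in the language of $\mathbf{A}$ (with the arity of $t$), where $et$ is interpreted as the restriction to $e(A)$ of the term operation $e(t(x_1,\dots,x_n))$ of $\mathbf{A}$ (under which $e(A)$ is closed). This fixes a common similarity type for all $e(\mathbf{A})$, $\mathbf{A}$ in a class satisfying $e^2=e$. For a homomorphism $\varphi:\mathbf{B}\to\mathbf{C}$, $\varphi|_{e(B)}$ is a homomorphism $e(\mathbf{B})\to e(\mathbf{C})$. The term $e$ separates $\mathbf{A}$ if for all $a\neq b$ in $A$ there is a unary term $g$ with $e(g(a))\neq e(g(b))$. The term $e$ is dense for $\mathbf{A}$ if $\mathbf{A}$ is generated as an algebra by $e(A)$. *)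

From Stdlib Require Import FunctionalExtensionality.
From mathcomp Require Import all_boot.
Set Implicit Arguments. Unset Strict Implicit. Unset Printing Implicit Defensive.

Record signature := Signature { ops : Type; arity : ops -> nat }.

Inductive term (sg : signature) (V : Type) : Type :=
| Var : V -> term sg V
| App : forall o : ops sg, ('I_(arity o) -> term sg V) -> term sg V.
Arguments Var {sg V}.
Arguments App {sg V}.

Record algebra (sg : signature) := Algebra {
  carrier :> Type;
  op : forall o : ops sg, ('I_(arity o) -> carrier) -> carrier }.
Arguments op {sg} _ o.

Fixpoint eval (sg : signature) (A : algebra sg) (V : Type) (v : V -> A)
    (t : term sg V) : A :=
  match t with
  | Var x => v x
  | App o args => op A o (fun i => eval v (args i))
  end.

Definition uop (sg : signature) (A : algebra sg) (t : term sg unit) (a : A) : A :=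
  eval (fun _ => a) t.

Definition models (sg : signature) (A : algebra sg) (s t : term sg nat) : Prop :=
  forall v : nat -> A, eval v s = eval v t.

Definition inV (sg : signature) (Eqs : term sg nat * term sg nat -> Prop)
    (A : algebra sg) : Prop :=
  forall s t, Eqs (s, t) -> models A s t.

Definition is_hom (sg : signature) (A B : algebra sg) (f : A -> B) : Prop :=
  forall o (args : 'I_(arity o) -> A), f (op A o args) = op B o (fun i => f (args i)).

Definition isomorphic (sg : signature) (A B : algebra sg) : Prop :=
  exists f : A -> B, is_hom f /\ bijective f.

Definition subuniverse (sg : signature) (A : algebra sg) (S : A -> Prop) : Prop :=
  forall o (args : 'I_(arity o) -> A), (forall i, S (args i)) -> S (op A o args).

Definition subalg (sg : signature) (A : algebra sg) (S : A -> Prop)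
    (HS : subuniverse S) : algebra sg :=
  @Algebra sg {a : A | S a}
    (fun o args => exist S (op A o (fun i => proj1_sig (args i)))
                          (HS o _ (fun i => proj2_sig (args i)))).

Definition prod_alg (sg : signature) (I : Type) (F : I -> algebra sg) : algebra sg :=
  @Algebra sg (forall i : I, F i) (fun o args => fun i => op (F i) o (fun j => args j i)).

Definition separates (sg : signature) (e : term sg unit) (A : algebra sg) : Prop :=
  forall a b : A, a <> b ->
    exists g : term sg unit, uop e (uop g a) <> uop e (uop g b).

Definition generated_by (sg : signature) (A : algebra sg) (X : A -> Prop) : Prop :=
  forall S : A -> Prop, subuniverse S -> (forall x, X x -> S x) -> forall a : A, S a.

Definition eimage (sg : signature) (e : term sg unit) (A : algebra sg) (a : A) : Prop :=
  exists b : A, a = uop e b.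
Arguments eimage {sg} e A a.

Definition dense (sg : signature) (e : term sg unit) (A : algebra sg) : Prop :=
  generated_by (eimage e A).

(* Localization: the signature has one symbol "et" for each term t in n variables. *)
Definition locsig (sg : signature) : signature :=
  @Signature {n : nat & term sg 'I_n} (fun p => projT1 p).

Definition loc (sg : signature) (e : term sg unit) (A : algebra sg) : algebra (locsig sg) :=
  @Algebra (locsig sg) {a : A | eimage e A a}
    (fun p args =>
       exist (eimage e A)
         (uop e (eval (fun i => proj1_sig (args i)) (projT2 p)))
         (ex_intro _ (eval (fun i => proj1_sig (args i)) (projT2 p)) erefl)).

Lemma hom_eval (sg : signature) (A B : algebra sg) (f : A -> B) (Hf : is_hom f)
  (V : Type) (v : V -> A) (t : term sg V) : f (eval v t) = eval (fun x => f (v x)) t.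
Proof.
elim: t => [x|o args IH] //=.
rewrite Hf; f_equal; apply: functional_extensionality => i; exact: IH.
Qed.

Lemma hom_eimage (sg : signature) (e : term sg unit) (A B : algebra sg) (f : A -> B)
  (Hf : is_hom f) (a : A) : eimage e A a -> eimage e B (f a).
Proof.
case=> b ->; exists (f b); rewrite /uop (hom_eval Hf); done.
Qed.

Definition res (sg : signature) (e : term sg unit) (A B : algebra sg) (f : A -> B)
  (Hf : is_hom f) : loc e A -> loc e B :=
  fun x => exist (eimage e B) (f (proj1_sig x)) (hom_eimage Hf (proj2_sig x)).
Arguments res {sg} e {A B f} Hf _.

(* Identities and separation are reflected by injective homomorphisms and are
   checked coordinatewise in products, which gives (1).  For (2), density makes
   every element of A the value of a term over e(A), so a homomorphism is
   determined by its values there, and a map k on e(A) extends to a homomorphism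
   exactly when t(x) = t'(x') in A implies t(k x) = t'(k x') in B.  A
   homomorphism h : e(A) -> e(B) commutes with every [e g t]; so if t(h x) and
   t'(h x') differed, a separating unary term g would produce e g t (h x) and
   e g t' (h x') that differ, although they are the images under h of the equal
   elements e g t x = e g t' x'. *)
From Stdlib Require Import FunctionalExtensionality ProofIrrelevance Classical ClassicalEpsilon.
From mathcomp Require Import all_boot.
Set Implicit Arguments. Unset Strict Implicit. Unset Printing Implicit Defensive.

Section Terms.
Variable sg : signature.

Fixpoint tmap V W (m : V -> W) (t : term sg V) : term sg W :=
  match t with Var x => Var (m x) | App o args => App o (fun i => tmap m (args i)) end.

Fixpoint tbind V W (f : V -> term sg W) (t : term sg V) : term sg W :=
  match t with Var x => f x | App o args => App o (fun i => tbind f (args i)) end.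

Lemma eval_tmap (A : algebra sg) V W (m : V -> W) (v : W -> A) t :
  eval v (tmap m t) = eval (fun x => v (m x)) t.
Proof.
elim: t => [x|o args IH] //=; congr (op A o); exact: functional_extensionality.
Qed.

Lemma eval_tbind (A : algebra sg) V W (f : V -> term sg W) (v : W -> A) t :
  eval v (tbind f t) = eval (fun x => eval v (f x)) t.
Proof.
elim: t => [x|o args IH] //=; congr (op A o); exact: functional_extensionality.
Qed.

Lemma tmap_comp V W X (m : V -> W) (m' : W -> X) t :
  tmap m' (tmap m t) = tmap (fun x => m' (m x)) t.
Proof.
elim: t => [x|o args IH] //=; congr (App o); exact: functional_extensionality.
Qed.

Lemma eq_tmap V W (m m' : V -> W) t : m =1 m' -> tmap m t = tmap m' t.
Proof.
move=> Emm'; elim: t => [x|o args IH] /=; first by rewrite Emm'.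
congr (App o); exact: functional_extensionality.
Qed.

(* Needed because the localization only has symbols [e t] for terms in finitely
   many variables. *)
Lemma term_finite_renaming V (u : term sg V) :
  {n : nat & {t : term sg 'I_n & {m : 'I_n -> V | u = tmap m t}}}.
Proof.
elim: u => [x|o args IH]; first by exists 1, (Var ord0), (fun _ => x).
pose T := {i : 'I_(arity o) & 'I_(projT1 (IH i))}.
pose sub_var i j : T := existT (fun i => 'I_(projT1 (IH i))) i j.
exists #|{: T}|.
exists (App o (fun i => tmap (fun j => enum_rank (sub_var i j)) (projT1 (projT2 (IH i))))).
exists (fun r => let x := enum_val r in proj1_sig (projT2 (projT2 (IH (tag x)))) (tagged x)).
congr (App o); apply: functional_extensionality => i.
rewrite [LHS](proj2_sig (projT2 (projT2 (IH i)))).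
etransitivity; last by symmetry; apply: tmap_comp.
by apply: eq_tmap => j /=; rewrite enum_rankK.
Qed.

End Terms.

Lemma sig_eq (T : Type) (P : T -> Prop) (x y : sig P) : proj1_sig x = proj1_sig y -> x = y.
Proof. apply: eq_sig_hprop => ? ? ?; exact: proof_irrelevance. Qed.

Section Homomorphisms.
Variable sg : signature.
Implicit Types A B : algebra sg.

Lemma hom_uop A B (f : A -> B) (t : term sg unit) a : is_hom f -> f (uop t a) = uop t (f a).
Proof. by move=> Hf; rewrite /uop (hom_eval Hf). Qed.

Lemma hom_inverse A B (f : A -> B) (g : B -> A) :
  is_hom f -> cancel f g -> cancel g f -> is_hom g.
Proof.
move=> Hf fK gK o args; apply: (can_inj fK).
by rewrite gK Hf; congr (op B o); apply: functional_extensionality => i; rewrite gK.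
Qed.

Lemma subalg_val_hom A (S : A -> Prop) (HS : subuniverse S) :
  is_hom (fun x : subalg HS => proj1_sig x).
Proof. by []. Qed.

Lemma prod_proj_hom I (F : I -> algebra sg) i : is_hom (fun x : prod_alg F => x i).
Proof. by []. Qed.

Lemma inV_inj_hom Eqs A B (f : A -> B) :
  is_hom f -> injective f -> inV Eqs B -> inV Eqs A.
Proof.
by move=> Hf f_inj HB s t /HB Est v; apply: f_inj; rewrite !(hom_eval Hf).
Qed.

Lemma separates_inj_hom (e : term sg unit) A B (f : A -> B) :
  is_hom f -> injective f -> separates e B -> separates e A.
Proof.
move=> Hf f_inj sepB a b /(contra_not (@f_inj a b)) /sepB [g Hg].
by exists g => Eab; apply: Hg; rewrite -!(hom_uop _ _ Hf) Eab.
Qed.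

Lemma inV_prod Eqs I (F : I -> algebra sg) :
  (forall i, inV Eqs (F i)) -> inV Eqs (prod_alg F).
Proof.
move=> HF s t Est v; apply: functional_extensionality_dep => i.
by rewrite !(hom_eval (prod_proj_hom (F:=F) i)) (HF i _ _ Est).
Qed.

Lemma separates_prod (e : term sg unit) I (F : I -> algebra sg) :
  (forall i, separates e (F i)) -> separates e (prod_alg F).
Proof.
move=> HF a b Nab.
have [i Ni] : exists i, a i <> b i.
  by apply: NNPP => Nex; apply/Nab/functional_extensionality_dep => i; apply: NNPP => Ni; apply/Nex; exists i.
have [g Hg] := HF i _ _ Ni.
by exists g => Eab; apply: Hg; rewrite -!(hom_uop _ _ (prod_proj_hom (F:=F) i)) Eab.
Qed.

Lemma eq_hom_on_generators A B (X : A -> Prop) (f g : A -> B) :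
  generated_by X -> is_hom f -> is_hom g -> (forall x, X x -> f x = g x) -> f =1 g.
Proof.
move=> genX Hf Hg Efg; apply: (genX (fun a => f a = g a)) => // o args Eargs.
by rewrite Hf Hg; congr (op B o); apply: functional_extensionality.
Qed.

Lemma generated_by_eval A (X : A -> Prop) :
  generated_by X -> forall a, exists u : term sg {x | X x}, a = eval (@proj1_sig _ _) u.
Proof.
move=> genX; apply: genX => [o args Hargs|x Xx]; last by exists (Var (exist _ x Xx)).
pose U i := proj1_sig (constructive_indefinite_description _ (Hargs i)).
exists (App o U) => /=; congr (op A o); apply: functional_extensionality => i.
exact: (proj2_sig (constructive_indefinite_description _ (Hargs i))).
Qed.

Lemma hom_extension A B (X : A -> Prop) (k : {x | X x} -> B) :
  generated_by X ->
  (forall u u' : term sg {x | X x},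
     eval (@proj1_sig _ _) u = eval (@proj1_sig _ _) u' -> eval k u = eval k u') ->
  exists2 f : A -> B, is_hom f & forall x : {x | X x}, f (proj1_sig x) = k x.
Proof.
move=> genX k_rel; have term_rep := generated_by_eval genX.
have Hex a : exists b, forall u, a = eval (@proj1_sig _ _) u -> b = eval k u.
  by have [u0 E0] := term_rep a; exists (eval k u0) => u Eu; apply: k_rel; rewrite -E0.
pose f a := proj1_sig (constructive_indefinite_description _ (Hex a)).
have f_eval a u : a = eval (@proj1_sig _ _) u -> f a = eval k u.
  exact: (proj2_sig (constructive_indefinite_description _ (Hex a))).
exists f => [o args|x]; last by rewrite (f_eval _ (Var x)).
pose U i := proj1_sig (constructive_indefinite_description _ (term_rep (args i))).
have EU i : args i = eval (@proj1_sig _ _) (U i).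
  exact: (proj2_sig (constructive_indefinite_description _ (term_rep (args i)))).
rewrite (f_eval _ (App o U)) /=; congr (op _ o); apply: functional_extensionality => i.
  by rewrite (f_eval _ _ (EU i)).
by rewrite -EU.
Qed.

End Homomorphisms.

Section Localization.
Variables (sg : signature) (e : term sg unit).

Definition loc_elem (A : algebra sg) (a : A) : loc e A :=
  exist (eimage e A) (uop e a) (ex_intro _ a erefl).

Lemma loc_hom_eval (A B : algebra sg) (h : loc e A -> loc e B) V (u : term sg V)
    (v : V -> loc e A) :
  is_hom h ->
  proj1_sig (h (loc_elem (eval (fun x => proj1_sig (v x)) u)))
  = uop e (eval (fun x => proj1_sig (h (v x))) u).
Proof.
move=> Hh; have [n [t [m ->]]] := term_finite_renaming u.
have -> : loc_elem (eval (fun x => proj1_sig (v x)) (tmap m t))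
          = op (loc e A) (existT _ n t) (fun i => v (m i)).
  by apply: sig_eq; rewrite /= eval_tmap.
by rewrite Hh /= eval_tmap.
Qed.

Lemma loc_hom_respects_relations (A B : algebra sg) (h : loc e A -> loc e B) :
  separates e B -> is_hom h ->
  forall u u' : term sg (loc e A),
    eval (@proj1_sig _ _) u = eval (@proj1_sig _ _) u' ->
    eval (fun x => proj1_sig (h x)) u = eval (fun x => proj1_sig (h x)) u'.
Proof.
move=> sepB Hh u u' Eu; apply: NNPP => /sepB [g]; apply.
have uop_subst w : uop g (eval (fun x => proj1_sig (h x)) w)
                   = eval (fun x => proj1_sig (h x)) (tbind (fun _ => w) g).
  by rewrite eval_tbind.
by rewrite !uop_subst -!(loc_hom_eval _ (fun x => x) Hh) !eval_tbind Eu.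
Qed.

Lemma res_inj (A B : algebra sg) (f g : A -> B) (Hf : is_hom f) (Hg : is_hom g) :
  dense e A -> res e Hf =1 res e Hg -> f =1 g.
Proof.
move=> denseA Efg; apply: (eq_hom_on_generators denseA Hf Hg) => x Xx.
exact: (f_equal (@proj1_sig _ _) (Efg (exist _ x Xx))).
Qed.

Lemma res_surj (A B : algebra sg) (h : loc e A -> loc e B) :
  dense e A -> separates e B -> is_hom h ->
  exists (f : A -> B) (Hf : is_hom f), res e Hf =1 h.
Proof.
move=> denseA sepB Hh.
have [f Hf Efh] := hom_extension denseA (loc_hom_respects_relations sepB Hh).
by exists f, Hf => x; apply: sig_eq; rewrite /= Efh.
Qed.

End Localization.

Theorem lemma2p2 (sg : signature) (Eqs : term sg nat * term sg nat -> Prop)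
  (e : term sg unit)
  (He : forall A : algebra sg, inV Eqs A -> forall a : A, uop e (uop e a) = uop e a) :
  ((forall A B : algebra sg, inV Eqs A -> separates e A -> isomorphic A B ->
      inV Eqs B /\ separates e B)
   /\ (forall (A : algebra sg) (S : A -> Prop) (HS : subuniverse S),
      inV Eqs A -> separates e A -> inV Eqs (subalg HS) /\ separates e (subalg HS))
   /\ (forall (I : Type) (F : I -> algebra sg),
      (forall i, inV Eqs (F i) /\ separates e (F i)) ->
      inV Eqs (prod_alg F) /\ separates e (prod_alg F)))
  /\
  (forall A B : algebra sg, inV Eqs A -> inV Eqs B -> dense e A ->
     (forall (f g : A -> B) (Hf : is_hom f) (Hg : is_hom g),
        res e Hf =1 res e Hg -> f =1 g)
     /\
     (separates e B ->
        forall h : loc e A -> loc e B, is_hom h ->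
          exists (f : A -> B) (Hf : is_hom f), res e Hf =1 h)).
Proof.
split; last first.
  move=> A B _ _ denseA; split=> [f g Hf Hg|sepB h Hh]; first exact: res_inj.
  exact: res_surj.
split; [|split].
- move=> A B HA sepA [f [Hf [g fK gK]]].
  have Hg := hom_inverse Hf fK gK; have g_inj := can_inj gK.
  by split; [apply: inV_inj_hom Hg g_inj HA | apply: separates_inj_hom Hg g_inj sepA].
- move=> A S HS HA sepA; have val_inj : injective (fun x : subalg HS => proj1_sig x).
    by move=> x y; apply: sig_eq.
  split; [exact: inV_inj_hom (subalg_val_hom (HS:=HS)) val_inj HA
         | exact: separates_inj_hom (subalg_val_hom (HS:=HS)) val_inj sepA].
- move=> I F HF; split; [apply: inV_prod => i; exact: (HF i).1
                        | apply: separates_prod => i; exact: (HF i).2].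
Qed.
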